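(* Let $\Gamma$ be a triangulation of a connected closed surface $M$ and let $\tau$ be a $z$-orientation of $\Gamma$. For every vertex of type II, the number of edges of type II directed into this vertex equals the number of edges of type II directed out of it.
   Context: Let $M$ be a connected closed $2$-dimensional surface (not necessarily orientable). A triangulation of $M$ is a $2$-cell embedding of a connected simple finite graph in $M$ such that every face is a triangle; then every edge lies in exactly two distinct faces, and two distinct faces meet in an edge, in a vertex, or not at all. A zigzag in a triangulation $\Gamma$ is a sequence of edges $(e_i)_{i\in\mathbb N}$ such that for every $i$: $e_i$ and $e_{i+1}$ are distinct edges of a common face; the face containing $e_i,e_{i+1}$ is different from the face containing $e_{i+1},e_{i+2}$; and $e_i$, $e_{i+2}$ have no common vertex. Such a sequence is periodic and is regarded as a cyclic sequence $e_1,\dots,e_n$ ($n$ the minimal period); consecutive edges share a vertex, so a zigzag passes through each of its edges in a definite direction (from the vertex shared with the previous edge to the vertex shared with the next). The reversed sequence $Z^{-1}$ of a zigzag $Z$ is again a zigzag and $Z\neq Z^{-1}$. If $\Gamma$ has exactly $k$ zigzags up to reversal, a $z$-orientation of $\Gamma$ is a set $\tau$ of $k$ zigzags containing exactly one of $Z,Z^{-1}$ for every zigzag $Z$. For a $z$-orientation $\tau$, each edge $e$ either occurs twice in one zigzag of $\tau$ and in no other, or occurs once in each of exactly two distinct zigzags of $\tau$ and in no other. The edge $e$ is of type I if these two passages through $e$ are in opposite directions, and of type II if they are in the same direction; edges of type II are regarded as directed edges with this common direction. A vertex is of type I if all edges containing it are of type I, and of type II otherwise. *)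

From mathcomp Require Import all_boot.
Set Implicit Arguments. Unset Strict Implicit. Unset Printing Implicit Defensive.

(* ---------- Triangulations (combinatorial model) ----------
   Vertices: a finite type T.  Faces: a set F of 3-element vertex sets
   (faces are determined by their vertex sets). *)

Section Tri.
Variable T : finType.
Variable F : {set {set T}}.

Definition is_edge (e : {set T}) : bool :=
  (#|e| == 2) && [exists f in F, e \subset f].

Definition link_rel (v : T) : rel T := fun a b => [set v; a; b] \in F.

Definition adj : rel T := fun a b => is_edge [set a; b].

Definition is_triangulation : Prop :=
  [/\ F != set0 /\ (forall f, f \in F -> #|f| = 3),
      (forall v : T, exists2 f, f \in F & v \in f),
      (forall e, is_edge e -> #|[set f in F | e \subset f]| = 2),
      (* the link of every vertex is connected (hence a single cycle) *)
      (forall v a b, adj v a -> adj v b -> connect (link_rel v) a b)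
    &
      (forall a b : T, connect adj a b)].

Definition zat (s : seq {set T}) (i : nat) : {set T} := nth set0 s (i %% size s).

Definition is_zigzag (s : seq {set T}) : Prop :=
  [/\ 0 < size s /\ (forall i, is_edge (zat s i)),
      (forall i, zat s i != zat s i.+1 /\
                 exists2 f, f \in F & (zat s i \subset f) && (zat s i.+1 \subset f)),
      (forall i f g, f \in F -> g \in F ->
          zat s i \subset f -> zat s i.+1 \subset f ->
          zat s i.+1 \subset g -> zat s i.+2 \subset g -> f != g),
      (forall i, [disjoint zat s i & zat s i.+2])
    &
      (forall d, 0 < d < size s -> rot d s != s)].

Definition cyc_eq (s t : seq {set T}) : bool :=
  has (fun d => rot d s == t) (iota 0 (size s)).

(* a z-orientation: a collection of zigzags containing exactly one of
   Z, Z^{-1} (up to the cyclic shift) for every zigzag Z *)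
Definition z_orientation (tau : seq (seq {set T})) : Prop :=
  (forall Z, Z \in tau -> is_zigzag Z) /\
  (forall Z, is_zigzag Z ->
     count (fun Y => cyc_eq Z Y || cyc_eq (rev Z) Y) tau = 1).

(* the passages of the zigzags of tau through the edge e, each recorded as
   the pair (start vertex, end vertex) -- as singleton sets -- where the start
   vertex is the one shared with the previous edge and the end vertex the one
   shared with the next edge *)
Definition edge_passages (tau : seq (seq {set T})) (e : {set T})
  : seq ({set T} * {set T}) :=
  [seq (zat Z (i + size Z).-1 :&: zat Z i, zat Z i :&: zat Z i.+1)
     | Z <- tau, i <- [seq i <- iota 0 (size Z) | zat Z i == e]].

Definition typeI_edge (tau : seq (seq {set T})) (e : {set T}) : Prop :=
  exists u w : T,
    perm_eq (edge_passages tau e) [:: ([set u], [set w]); ([set w], [set u])].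

Definition typeII_dir (tau : seq (seq {set T})) (u w : T) : bool :=
  perm_eq (edge_passages tau [set u; w])
          [:: ([set u], [set w]); ([set u], [set w])].

Definition vertex_typeII (tau : seq (seq {set T})) (v : T) : Prop :=
  ~ (forall e, is_edge e -> v \in e -> typeI_edge tau e).

End Tri.

From mathcomp Require Import all_boot zify.
Set Implicit Arguments. Unset Strict Implicit. Unset Printing Implicit Defensive.

(* A passage of a zigzag through one of its edges is recorded as the pair
   (entry vertex, exit vertex).  The proof is a double count of passages.

   1. Conservation: the exit vertex of the i-th passage of a zigzag is the
      entry vertex of the (i+1)-th one, so over all zigzags of tau as many
      passages enter a vertex v as leave it ([passage_conservation]).
   2. Every edge e is passed exactly twice by the zigzags of tau
      ([edge_passages_size]).  A zigzag is determined by two consecutive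
      edges; the four edges x forming a face with e are paired by x |-> the
      edge following (x, e); every x starts a zigzag through (x, e), and since
      tau contains exactly one of Z, Z^-1 and Z^-1 is never a rotation of Z,
      exactly one edge of each pair precedes e in a zigzag of tau.
   3. Hence, writing N(u,w) for the number of passages u -> w through {u,w},
      N(u,v) + N(v,u) is 2 for a neighbour u of v, and the edge is of type II
      directed u -> v iff N(u,v) = 2.  Subtracting the type I contributions
      (N = 1 on both sides) from the two equal totals of step 1 yields the
      theorem. *)

Lemma count_gt1 (X : eqType) (a : pred X) (s : seq X) x y :
  x \in s -> y \in s -> x != y -> a x -> a y -> 1 < count a s.
Proof.
elim: s => // z s IH; rewrite !inE => hx hy hne ax ay /=.
case: (eqVneq x z) hx => [exz _ | hxz /= hx].
  subst z; rewrite ax; rewrite eq_sym (negbTE hne) /= in hy.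
  have : 0 < count a s by rewrite -has_count; apply/hasP; exists y.
  lia.
case: (eqVneq y z) hy => [eyz _ | hyz /= hy].
  subst z; rewrite ay.
  have : 0 < count a s by rewrite -has_count; apply/hasP; exists x.
  lia.
have := IH hx hy hne ax ay; lia.
Qed.

Lemma count_iota_shift (g : pred nat) n : g n = g 0 ->
  count (fun i => g i.+1) (iota 0 n) = count g (iota 0 n).
Proof.
move=> hg; have -> : count (fun i => g i.+1) (iota 0 n) = count g (iota 1 n).
  by rewrite (iotaDl 1 0) count_map.
case: n hg => // n hg.
have -> : iota 1 n.+1 = iota 1 n ++ [:: n.+1] by rewrite -[n.+1]addn1 iotaD /= (addnC 1 n).
by rewrite count_cat /= hg addn0 addnC.
Qed.

Lemma count_sum (I : finType) (X : eqType) (a : pred X) (b : I -> pred X) (s : seq X) :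
  (forall p, p \in s -> a p = \sum_u b u p :> nat) -> count a s = \sum_u count (b u) s.
Proof.
elim: s => [_|x s IH H] /=; first by rewrite big1.
rewrite big_split /= -H ?mem_head // IH // => p hp; apply: H; by rewrite inE hp orbT.
Qed.

Lemma sum_eq_single (I : finType) (a : I) (c : bool) : \sum_u (((a == u) && c) : nat) = c.
Proof.
rewrite (bigD1 a) //= eqxx big1 ?addn0 // => u hu.
by rewrite eq_sym (negbTE hu).
Qed.

Lemma perm_eq_double (X : eqType) (s : seq X) q : size s = 2 ->
  perm_eq s [:: q; q] = (count (pred1 q) s == 2).
Proof.
move=> hs; apply/idP/idP.
  by move/permP => /(_ (pred1 q)) -> /=; rewrite eqxx.
move=> hc; have : all (pred1 q) s by rewrite all_count hs.
by move/all_pred1P => ->; rewrite hs perm_refl.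
Qed.

Section CyclicIndex.
Variable T : finType.
Implicit Types s : seq {set T}.

Lemma zat_mod s i : zat s (i %% size s) = zat s i.
Proof. by rewrite /zat modn_mod. Qed.

Lemma zat_addM s i k : zat s (i + k * size s) = zat s i.
Proof. by rewrite /zat addnC modnMDl. Qed.

Lemma zat_add_size s k : zat s (k + size s) = zat s k.
Proof. by have := zat_addM s k 1; rewrite mul1n. Qed.

Lemma zat_eq_mod s i j : i %% size s = j %% size s -> zat s i = zat s j.
Proof. by rewrite /zat => ->. Qed.

Lemma zat_nth s i : i < size s -> zat s i = nth set0 s i.
Proof. by move=> h; rewrite /zat modn_small. Qed.

Lemma zat_prev_mod s X : 0 < size s ->
  zat s ((X %% size s + size s).-1) = zat s (X + (size s).-1).
Proof.
move=> hn; apply: zat_eq_mod.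
have -> : (X %% size s + size s).-1 = X %% size s + (size s).-1 by lia.
by rewrite modnDml.
Qed.

Lemma zat_rot s d i : d <= size s -> zat (rot d s) i = zat s (i + d).
Proof.
move=> hd; rewrite /zat size_rot; set n := size s.
case: (posnP n) => hn.
  move: hd; rewrite /n in hn *; move/size0nil: hn => ->; rewrite leqn0 => /eqP ->.
  by rewrite rot0 /= !nth_nil.
have hj : i %% n < n by apply: ltn_pmod.
rewrite -modnDml; set j := i %% n.
rewrite /rot nth_cat size_drop -/n.
case: ltnP => hjd.
  rewrite nth_drop modn_small; last lia.
  by rewrite addnC.
rewrite nth_take; last lia.
have -> : j + d = (j - (n - d)) + n by lia.
rewrite modnDr modn_small //; lia.
Qed.

(* Reading the reversed sequence at i is reading s at -(i+1) = (i+1)(n-1) mod n. *)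
Lemma zat_rev s i : 0 < size s -> zat (rev s) i = zat s (i.+1 * (size s).-1).
Proof.
move=> hn; rewrite /zat size_rev; set n := size s.
rewrite nth_rev; last exact: ltn_pmod.
have hr := ltn_pmod i hn; have hq := divn_eq i n.
set r := i %% n in hr hq *; set q := i %/ n in hq.
have -> : i.+1 * n.-1 = (q * n.-1 + r) * n + (n - r.+1) by nia.
rewrite modnMDl modn_small //; lia.
Qed.

Definition min_period s := forall d, 0 < d < size s -> rot d s != s.

Lemma period_ge_size s m : min_period s -> 0 < m ->
  (forall j, zat s (j + m) = zat s j) -> size s <= m.
Proof.
move=> hmin hm H; rewrite leqNgt; apply/negP => hlt.
have := hmin m; rewrite hm hlt => /(_ isT) /negP; apply.
apply/eqP; apply: (@eq_from_nth _ set0); rewrite size_rot // => j hj.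
rewrite -zat_nth ?size_rot // -zat_nth // zat_rot ?H //; exact: ltnW.
Qed.

Lemma period_from s a m : 0 < size s ->
  (forall k, zat s (a + k + m) = zat s (a + k)) -> forall x, zat s (x + m) = zat s x.
Proof.
move=> hn H x.
rewrite -[in LHS](zat_addM s (x + m) a) -[in RHS](zat_addM s x a).
have -> : x + m + a * size s = a + (x + a * (size s).-1) + m by nia.
have -> : x + a * size s = a + (x + a * (size s).-1) by nia.
exact: H.
Qed.

Lemma shift_size_le s t a b : min_period t -> 0 < size s -> 0 < size t ->
  (forall k, zat s (a + k) = zat t (b + k)) -> size t <= size s.
Proof.
move=> hmt hs ht H; apply: period_ge_size => //.
apply: (period_from (a := b)) => // k.
by rewrite -addnA -H addnA zat_add_size H.
Qed.

Lemma shift_cyc_eq s t a b : min_period s -> min_period t -> 0 < size s -> 0 < size t ->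
  (forall k, zat s (a + k) = zat t (b + k)) -> cyc_eq s t.
Proof.
move=> hms hmt hs ht H.
have en : size s = size t.
  apply/eqP; rewrite eqn_leq (shift_size_le hmt hs ht H).
  by rewrite (shift_size_le (a := b) (b := a) hms ht hs) // => k; rewrite H.
set n := size s in en hs *.
set d := (a + b * n.-1) %% n.
have hd : d < n by apply: ltn_pmod.
apply/hasP; exists d; first by rewrite mem_iota add0n hd.
apply/eqP; apply: (@eq_from_nth _ set0); rewrite size_rot // => j hj.
rewrite -zat_nth ?size_rot // -zat_nth -?en // zat_rot; last exact: ltnW.
rewrite -(zat_addM t j b) -en.
have -> : j + b * n = b + (j + b * n.-1) by nia.
rewrite -H; apply: zat_eq_mod; rewrite modnDmr; congr (_ %% _); lia.
Qed.

Lemma cyc_eq_rot s t : cyc_eq s t -> exists2 d, d < size s & rot d s = t.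
Proof. by case/hasP => d; rewrite mem_iota add0n => /andP [_ h] /eqP; exists d. Qed.

Lemma cyc_eq_refl s : 0 < size s -> cyc_eq s s.
Proof. by move=> h; apply/hasP; exists 0; rewrite ?mem_iota ?rot0. Qed.

Lemma size_gt1E s : 1 < size s -> exists q, size s = q.+2.
Proof. by case: (size s) => [|[|q]] // _; exists q. Qed.

End CyclicIndex.

Section Triangulation.
Variable T : finType.
Variable F : {set {set T}}.
Hypothesis HT : is_triangulation F.

Lemma face_card (f : {set T}) : f \in F -> #|f| = 3.
Proof. by case: HT => [[_ H] _ _ _ _]; apply: H. Qed.

Lemma edge_faces_card (e : {set T}) : is_edge F e -> #|[set f in F | e \subset f]| = 2.
Proof. by case: HT => [_ _ H _ _]; apply: H. Qed.

Lemma edge_card (e : {set T}) : is_edge F e -> #|e| = 2.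
Proof. by case/andP => /eqP. Qed.

Lemma edge_of_face (e f : {set T}) : f \in F -> e \subset f -> #|e| = 2 -> is_edge F e.
Proof.
move=> hf he h2; rewrite /is_edge h2 eqxx /=; apply/existsP; exists f; by rewrite hf.
Qed.

Lemma edge_in_face (e : {set T}) : is_edge F e -> exists2 f, f \in F & e \subset f.
Proof. by case/andP => _ /existsP [f /andP [hf he]]; exists f. Qed.

Lemma edge_meet_le1 (x y : {set T}) : is_edge F x -> is_edge F y -> x != y ->
  #|x :&: y| <= 1.
Proof.
move=> hx hy hxy; rewrite leqNgt; apply/negP => h.
have sxy : x \subset y.
  apply/setIidPl/eqP; rewrite eqEcard subsetIl (edge_card hx); exact: h.
by move/negP: hxy; apply; rewrite eqEcard sxy (edge_card hx) (edge_card hy).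
Qed.

Lemma edges_span_face (x y f : {set T}) : is_edge F x -> is_edge F y -> x != y ->
  f \in F -> x \subset f -> y \subset f -> x :|: y = f.
Proof.
move=> hx hy hxy hf sx sy; apply/eqP; rewrite eqEcard subUset sx sy /=.
have := cardsUI x y; have := edge_meet_le1 hx hy hxy.
rewrite (edge_card hx) (edge_card hy) (face_card hf); lia.
Qed.

Lemma edges_meet1 (x y : {set T}) : is_edge F x -> is_edge F y -> x != y ->
  x :|: y \in F -> #|x :&: y| = 1.
Proof.
move=> hx hy hxy hf.
have := cardsUI x y; have := edge_meet_le1 hx hy hxy.
rewrite (edge_card hx) (edge_card hy) (face_card hf); lia.
Qed.

Lemma other_face (y f : {set T}) : is_edge F y -> f \in F -> y \subset f ->
  exists g, [/\ g \in F, y \subset g, g != f &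
     forall h, h \in F -> y \subset h -> h = f \/ h = g].
Proof.
move=> hy hf sf; have /eqP/cards2P [a [b [hab hs]]] := edge_faces_card hy.
have hin h : (h \in F) && (y \subset h) = (h \in [set a; b]) by rewrite -hs inE.
have : f \in [set a; b] by rewrite -hin hf sf.
rewrite !inE => /orP [] /eqP ef; subst f.
- exists b; have := hin b; rewrite !inE eqxx orbT => /andP [hb1 hb2].
  split => //; first by rewrite eq_sym.
  move=> h hh sh; have := hin h; rewrite hh sh !inE => /esym/orP [] /eqP ->; auto.
- exists a; have := hin a; rewrite !inE eqxx /= => /andP [hb1 hb2].
  split => // h hh sh; have := hin h; rewrite hh sh !inE => /esym/orP [] /eqP ->; auto.
Qed.

Definition face_pair (x y : {set T}) : bool :=
  [&& is_edge F x, is_edge F y, x != y & x :|: y \in F].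

Definition zig_step (x y z : {set T}) : Prop :=
  [/\ face_pair x y, face_pair y z, x :|: y != y :|: z & [disjoint x & z]].

Definition next_edge (x y : {set T}) : {set T} :=
  odflt set0 [pick g | (g \in F) && (y \subset g) && (g != x :|: y)] :\: x.

Lemma face_pair_sym x y : face_pair x y -> face_pair y x.
Proof. by case/and4P => a b c d; rewrite /face_pair a b eq_sym c setUC d. Qed.

Lemma zig_step_rev x y z : zig_step x y z -> zig_step z y x.
Proof.
case=> a b c d; split; try exact: face_pair_sym.
  by rewrite setUC eq_sym setUC.
by rewrite disjoint_sym.
Qed.

Lemma face_pair_meet x y : face_pair x y -> 0 < #|x :&: y|.
Proof. by case/and4P => hx hy hxy hf; rewrite (edges_meet1 hx hy hxy hf). Qed.

Lemma pick_other_face x y g : face_pair x y -> g \in F -> y \subset g -> g != x :|: y ->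
  odflt set0 [pick g | (g \in F) && (y \subset g) && (g != x :|: y)] = g.
Proof.
case/and4P => hx hy hxy hf hg sg ng.
have [g0 [hg0 sg0 ng0 U]] := other_face hy hf (subsetUr x y).
have eg : g = g0 by case: (U g hg sg) => // eg; rewrite eg eqxx in ng.
case: pickP => [g' /andP [/andP [hg' sg'] ng'] | hn] /=.
  by rewrite eg; case: (U g' hg' sg') => // eg'; rewrite eg' eqxx in ng'.
by have := hn g; rewrite hg sg ng.
Qed.

Lemma next_edgeE x y z : zig_step x y z -> z = next_edge x y.
Proof.
move=> [hv1 hv2 hne hd].
have hv2' := hv2; case/and4P: hv2' => hy hz hyz hg.
rewrite /next_edge (pick_other_face hv1 hg (subsetUl y z)); last by rewrite eq_sym.
apply/eqP; rewrite eqEcard subsetD subsetUr disjoint_sym hd /=.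
rewrite cardsD (edge_card hz) (face_card hg).
have : #|x :&: y| <= #|(y :|: z) :&: x|.
  by apply: subset_leq_card; rewrite setIC setSI // subsetUl.
have := face_pair_meet hv1; lia.
Qed.

Lemma zig_step_next x y : face_pair x y -> zig_step x y (next_edge x y).
Proof.
move=> hv; have hv' := hv; case/and4P: hv' => hx hy hxy hf.
have [g [hg sg ng U]] := other_face hy hf (subsetUr x y).
rewrite /next_edge (pick_other_face hv hg sg ng).
set z := g :\: x.
have c1 : 0 < #|g :&: x|.
  have : #|x :&: y| <= #|g :&: x|.
    by apply: subset_leq_card; rewrite setIC setSI.
  have := face_pair_meet hv; lia.
have c2 : #|g :&: x| <= 1.
  rewrite leqNgt; apply/negP => h.
  have sx : x \subset g.
    apply/setIidPr/eqP; rewrite eqEcard subsetIr (edge_card hx); exact: h.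
  move/negP: ng; apply; rewrite eq_sym eqEcard subUset sx sg (face_card hf) (face_card hg).
  done.
have cz : #|z| = 2 by rewrite /z cardsD (face_card hg); lia.
have ez : is_edge F z by apply: (edge_of_face hg) => //; rewrite /z subsetDl.
have dxz : [disjoint x & z].
  by apply/pred0P => t /=; rewrite /z !inE; case: (t \in x); rewrite ?andbF.
have nyz : y != z.
  apply/negP => /eqP eyz.
  have /card_gt0P [t] := face_pair_meet hv; rewrite inE => /andP [t1 t2].
  by rewrite eyz (disjointFr dxz t1) in t2.
have eU : y :|: z = g by apply: edges_span_face => //; rewrite /z subsetDl.
split => //; first by rewrite /face_pair hy ez nyz eU hg.
by rewrite eU eq_sym.
Qed.

Implicit Types s t Z W : seq {set T}.

Definition local_zigzag s := forall i, zig_step (zat s i) (zat s i.+1) (zat s i.+2).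

Lemma zigzag_local s : is_zigzag F s -> local_zigzag s.
Proof.
case=> [[hs he] hadj hfac hdis hmin] i.
have vs j : face_pair (zat s j) (zat s j.+1).
  case: (hadj j) => hne [f hf /andP [s1 s2]].
  by rewrite /face_pair he he hne (edges_span_face (he j) (he j.+1) hne hf s1 s2).
split; [exact: vs | exact: vs | | exact: hdis].
apply/negP => /eqP heq.
have hf1 : zat s i :|: zat s i.+1 \in F by case/and4P: (vs i).
have hf2 : zat s i.+1 :|: zat s i.+2 \in F by case/and4P: (vs i.+1).
have := hfac i _ _ hf1 hf2 (subsetUl _ _) (subsetUr _ _) (subsetUl _ _) (subsetUr _ _).
by rewrite heq eqxx.
Qed.

Lemma local_zigzagP s : 0 < size s -> local_zigzag s -> min_period s -> is_zigzag F s.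
Proof.
move=> hs hz hm; split => //.
- by split => // i; case: (hz i) => /and4P [].
- move=> i; case: (hz i) => /and4P [_ _ hne hf] _ _ _; split => //.
  by exists (zat s i :|: zat s i.+1) => //; rewrite subsetUl subsetUr.
- move=> i f g hf hg s1 s2 s3 s4; case: (hz i) => v1 v2 hne _.
  case/and4P: v1 => h1 h2 h3 _; case/and4P: v2 => h4 h5 h6 _.
  by rewrite -(edges_span_face h1 h2 h3 hf s1 s2) -(edges_span_face h4 h5 h6 hg s3 s4).
- by move=> i; case: (hz i).
Qed.

Lemma zigzag_size_gt1 s : is_zigzag F s -> 1 < size s.
Proof.
case=> [[hs _] hadj _ _ _]; rewrite ltn_neqAle hs andbT.
apply/negP => /eqP h1; case: (hadj 0) => /negP h _; apply: h.
by rewrite /zat -h1 !modn1.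
Qed.

Lemma zigzag_size_gt0 s : is_zigzag F s -> 0 < size s.
Proof. by move/zigzag_size_gt1; lia. Qed.

Lemma zigzag_min_period s : is_zigzag F s -> min_period s.
Proof. by case. Qed.

Lemma local_zigzag_det Z W a b : local_zigzag Z -> local_zigzag W ->
  zat Z a = zat W b -> zat Z a.+1 = zat W b.+1 ->
  forall k, zat Z (a + k) = zat W (b + k).
Proof.
move=> hZ hW h0 h1.
suff H k : zat Z (a + k) = zat W (b + k) /\ zat Z (a + k).+1 = zat W (b + k).+1.
  by move=> k; case: (H k).
elim: k => [|k [IH1 IH2]]; first by rewrite !addn0.
rewrite !addnS; split => //.
by rewrite (next_edgeE (hZ _)) (next_edgeE (hW _)) IH1 IH2.
Qed.

Lemma zigzag_shift_cyc_eq Z W a b : is_zigzag F Z -> is_zigzag F W ->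
  zat Z a = zat W b -> zat Z a.+1 = zat W b.+1 -> cyc_eq Z W.
Proof.
move=> zZ zW h0 h1.
apply: (shift_cyc_eq (a := a) (b := b) (zigzag_min_period zZ) (zigzag_min_period zW));
  rewrite ?zigzag_size_gt0 //.
exact: local_zigzag_det (zigzag_local zZ) (zigzag_local zW) h0 h1.
Qed.

Lemma zigzag_no_short_shift Z a b : is_zigzag F Z -> a < b -> b < a + size Z ->
  zat Z a = zat Z b -> zat Z a.+1 = zat Z b.+1 -> False.
Proof.
move=> hZ hab hb h0 h1.
have D := local_zigzag_det (zigzag_local hZ) (zigzag_local hZ) h0 h1.
have : size Z <= b - a.
  apply: (period_ge_size (zigzag_min_period hZ)); first lia.
  apply: (period_from (a := a)); rewrite ?zigzag_size_gt0 // => k.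
  by rewrite D; congr zat; lia.
lia.
Qed.

Lemma rev_zigzag Z : is_zigzag F Z -> is_zigzag F (rev Z).
Proof.
move=> hZ; have hn := zigzag_size_gt1 hZ; have hz := zigzag_local hZ.
have hmin := zigzag_min_period hZ.
apply: local_zigzagP; rewrite ?size_rev; first lia.
- move=> i; rewrite !zat_rev; try lia; set n := size Z; apply: zig_step_rev.
  have e1 : zat Z ((i.+3 * n.-1).+1) = zat Z (i.+2 * n.-1).
    rewrite -(zat_addM Z (i.+2 * n.-1) 1); congr zat; nia.
  have e2 : zat Z ((i.+3 * n.-1).+2) = zat Z (i.+1 * n.-1).
    rewrite -(zat_addM Z (i.+1 * n.-1) 2); congr zat; nia.
  by have := hz (i.+3 * n.-1); rewrite e1 e2.
- move=> d; rewrite size_rev => hd; apply/negP => /eqP h.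
  have h2 : rotr d Z = Z by apply: (can_inj (@revK _)); rewrite rev_rotr h.
  by move/negP: (hmin d hd); apply; rewrite -{1}h2 rotrK.
Qed.

(* A zigzag is never a rotation of its reverse: the reflection would fix an
   edge (contradicting e_i != e_{i+1}) or swap e_i and e_{i+2} (contradicting
   their disjointness). *)
Lemma rev_not_cyc_eq Z : is_zigzag F Z -> ~~ cyc_eq (rev Z) Z.
Proof.
move=> hZ; apply/negP => /cyc_eq_rot [d hd hrot]; rewrite size_rev in hd.
have hz := zigzag_local hZ.
have [q hq] := size_gt1E (zigzag_size_gt1 hZ).
have reflect_at k : zat Z k = zat Z ((k + d).+1 * q.+1).
  by rewrite -{1}hrot zat_rot ?size_rev ?zat_rev ?hq //; lia.
have hd2 := odd_double_half d; set h := d./2 in hd2.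
case: (odd d) hd2 => hd2.
- set k := (h + 2) * q.+1.
  have ek : zat Z k = zat Z k.+2.
    rewrite reflect_at -(zat_addM Z k.+2 ((h + 2) * q + h)) hq; congr zat.
    rewrite /k; nia.
  case: (hz k) => /and4P [hx _ _ _] _ _ hdis.
  have /card_gt0P [a0 ha0] : 0 < #|zat Z k| by rewrite (edge_card hx).
  by have := disjointFr hdis ha0; rewrite -ek ha0.
- set k := (h + 1) * q.+1.
  have ek : zat Z k = zat Z k.+1.
    rewrite reflect_at -(zat_addM Z k.+1 ((h + 1) * q + h)) hq; congr zat.
    rewrite /k; nia.
  case: (hz k) => /and4P [_ _ hne _] _ _ _.
  by rewrite ek eqxx in hne.
Qed.

(* Every face pair (x, y) starts a zigzag: the orbit of (x, y) under the
   injective step map (x, y) |-> (y, next_edge x y). *)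

Definition step_pair (p : {set T} * {set T}) : {set T} * {set T} :=
  if face_pair p.1 p.2 then (p.2, next_edge p.1 p.2) else p.

Lemma step_pair_face p : face_pair p.1 p.2 -> face_pair (step_pair p).1 (step_pair p).2.
Proof. by move=> h; rewrite /step_pair h /=; case: (zig_step_next h). Qed.

Lemma step_pair_inj : injective step_pair.
Proof.
move=> [x1 y1] [x2 y2]; rewrite /step_pair /=.
case: ifP => h1; case: ifP => h2.
- case=> ey ez; subst y2.
  have t1 := zig_step_rev (zig_step_next h1); have t2 := zig_step_rev (zig_step_next h2).
  by rewrite (next_edgeE t1) (next_edgeE t2) ez.
- move=> e; have := @step_pair_face (x1, y1) h1; by rewrite /step_pair /= h1 e /= h2.
- move=> e; have := @step_pair_face (x2, y2) h2; by rewrite /step_pair /= h2 -e /= h1.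
- done.
Qed.

Lemma iter_step_face p k : face_pair p.1 p.2 ->
  face_pair (iter k step_pair p).1 (iter k step_pair p).2.
Proof. by move=> h; elim: k => //= k IH; apply: step_pair_face. Qed.

Lemma iter_step_mod p k : iter k step_pair p = iter (k %% order step_pair p) step_pair p.
Proof.
set N := order step_pair p.
have H m : iter (m * N) step_pair p = p.
  elim: m => // m IH; rewrite mulSn iterD IH iter_order //; exact: step_pair_inj.
by rewrite {1}(divn_eq k N) addnC iterD H.
Qed.

Definition orbit_zigzag p := map fst (orbit step_pair p).

Lemma zat_orbit_zigzag p k : zat (orbit_zigzag p) k = (iter k step_pair p).1.
Proof.
have hN := order_gt0 step_pair p.
rewrite /zat /orbit_zigzag size_map size_orbit (nth_map p); last by rewrite size_orbit ltn_pmod.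
by rewrite /orbit nth_traject ?ltn_pmod // -iter_step_mod.
Qed.

Lemma zat_orbit_zigzagS p k : face_pair p.1 p.2 ->
  zat (orbit_zigzag p) k.+1 = (iter k step_pair p).2.
Proof. by move=> h; rewrite zat_orbit_zigzag iterS /step_pair iter_step_face. Qed.

Lemma orbit_zigzag_zigzag p : face_pair p.1 p.2 -> is_zigzag F (orbit_zigzag p).
Proof.
move=> hp; apply: local_zigzagP.
- by rewrite size_map size_orbit order_gt0.
- move=> i; rewrite zat_orbit_zigzag !zat_orbit_zigzagS // iterS /step_pair iter_step_face //=.
  exact: zig_step_next (iter_step_face _ hp).
- move=> d; rewrite size_map size_orbit => /andP [d0 dN]; apply/negP => /eqP h.
  have e1 : iter d step_pair p = p.
    have a1 : zat (orbit_zigzag p) (0 + d) = zat (orbit_zigzag p) 0.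
      by rewrite -zat_rot ?h // size_map size_orbit ltnW.
    have a2 : zat (orbit_zigzag p) (1 + d) = zat (orbit_zigzag p) 1.
      by rewrite -zat_rot ?h // size_map size_orbit ltnW.
    rewrite add0n !zat_orbit_zigzag /= in a1; rewrite add1n !zat_orbit_zigzagS // /= in a2.
    move: a1 a2; case: (iter d step_pair p) => u w /= -> ->.
    by case: (p).
  have hdN : d < size (orbit step_pair p) by rewrite size_orbit.
  have h0N : 0 < size (orbit step_pair p) by rewrite size_orbit order_gt0.
  have := nth_uniq p hdN h0N (orbit_uniq step_pair p).
  rewrite /orbit !nth_traject ?order_gt0 // e1 /= eqxx => /esym /eqP e.
  by rewrite e in d0.
Qed.

Lemma orbit_zigzag0 p : zat (orbit_zigzag p) 0 = p.1.
Proof. by rewrite zat_orbit_zigzag. Qed.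

Lemma orbit_zigzag1 p : face_pair p.1 p.2 -> zat (orbit_zigzag p) 1 = p.2.
Proof. by move=> h; rewrite zat_orbit_zigzagS. Qed.

Lemma orbit_zigzag2 p : face_pair p.1 p.2 -> zat (orbit_zigzag p) 2 = next_edge p.1 p.2.
Proof. by move=> h; rewrite zat_orbit_zigzagS //= /step_pair h. Qed.

Section Orientation.
Variable tau : seq (seq {set T}).
Hypothesis Htau : z_orientation F tau.

Definition same_class Z := fun Y => cyc_eq Z Y || cyc_eq (rev Z) Y.

Lemma tau_zigzag Z : Z \in tau -> is_zigzag F Z.
Proof. by case: Htau => H _; apply: H. Qed.

Lemma tau_class_count Z : is_zigzag F Z -> count (same_class Z) tau = 1.
Proof. by case: Htau => _ H; apply: H. Qed.

Lemma same_class_refl Z : is_zigzag F Z -> same_class Z Z.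
Proof. by move=> hZ; rewrite /same_class cyc_eq_refl ?zigzag_size_gt0. Qed.

Lemma tau_class_unique Z W : Z \in tau -> W \in tau -> same_class Z W -> W = Z.
Proof.
move=> hZ hW hc; case: (eqVneq W Z) => // hne.
have zZ := tau_zigzag hZ.
have := count_gt1 hZ hW (contra_neq (@esym _ _ _) hne) (same_class_refl zZ) hc.
by rewrite (tau_class_count zZ).
Qed.

Lemma tau_uniq : uniq tau.
Proof.
apply: count_mem_uniq => x; case hx : (x \in tau); last by apply/count_memPn; rewrite hx.
have zx := tau_zigzag hx.
have le1 : count_mem x tau <= 1.
  rewrite -(tau_class_count zx); apply: sub_count => y /eqP ->.
  exact: same_class_refl.
have gt0 : 0 < count_mem x tau.
  by rewrite -has_count; apply/hasP; exists x; rewrite ?hx /=.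
by apply/eqP; rewrite eqn_leq le1 gt0.
Qed.

Definition passage (p : seq {set T} * nat) :=
  (zat p.1 (p.2 + size p.1).-1 :&: zat p.1 p.2, zat p.1 p.2 :&: zat p.1 p.2.+1).

Lemma zat_prev_window Z i : 0 < size Z ->
  let a := (i + size Z).-1 in zat Z a.+1 = zat Z i /\ zat Z a.+2 = zat Z i.+1.
Proof.
move=> hn a; rewrite -(zat_add_size Z i) -(zat_add_size Z i.+1) /a.
by split; congr zat; lia.
Qed.

Lemma passage_sets Z i : Z \in tau ->
  exists a b, [/\ a != b, a \in zat Z i, b \in zat Z i &
                  passage (Z, i) = ([set a], [set b])].
Proof.
move=> hZ; have zZ := tau_zigzag hZ.
set a0 := (i + size Z).-1.
have [e2 e3] := zat_prev_window i (zigzag_size_gt0 zZ).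
case: (zigzag_local zZ a0) => v1 v2 _ hd.
rewrite -/a0 e2 e3 in v1 v2 hd.
case/and4P: (v1) => h1 h2 h3 h4; case/and4P: (v2) => h5 h6 h7 h8.
have /cards1P [a ha] : #|zat Z a0 :&: zat Z i| == 1 by rewrite (edges_meet1 h1 h2 h3 h4).
have /cards1P [b hb] : #|zat Z i :&: zat Z i.+1| == 1 by rewrite (edges_meet1 h5 h6 h7 h8).
have ia : a \in zat Z a0 :&: zat Z i by rewrite ha set11.
have ib : b \in zat Z i :&: zat Z i.+1 by rewrite hb set11.
rewrite !inE in ia ib; case/andP: ia => ia1 ia2; case/andP: ib => ib1 ib2.
exists a, b; split => //; last by rewrite /passage /= -/a0 ha hb.
by apply/negP => /eqP eab; subst b; rewrite (disjointFr hd ia1) in ib2.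
Qed.

Section Edge.
Variable e : {set T}.
Hypothesis He : is_edge F e.

Definition occurrences : seq (seq {set T} * nat) :=
  [seq (Z, i) | Z <- tau, i <- [seq i <- iota 0 (size Z) | zat Z i == e]].

Definition pred_edge (p : seq {set T} * nat) := zat p.1 (p.2 + size p.1).-1.

Lemma edge_passagesE : edge_passages tau e = map passage occurrences.
Proof.
rewrite /edge_passages /occurrences map_flatten -map_comp.
by congr flatten; apply: eq_map => Z /=; rewrite -map_comp.
Qed.

Lemma mem_occurrences Z i : (Z, i) \in occurrences ->
  [/\ Z \in tau, i < size Z & zat Z i = e].
Proof.
case/allpairsPdep => [W [j [hW hj [-> ->]]]].
by move: hj; rewrite mem_filter mem_iota add0n => /andP [/eqP -> /andP [_ ->]].
Qed.

Lemma occurrences_uniq : uniq occurrences.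
Proof.
apply: (allpairs_uniq_dep (T := fun _ => nat)).
- exact: tau_uniq.
- by move=> Z _; apply: filter_uniq; apply: iota_uniq.
- by move=> [Z1 i1] [Z2 i2] _ _ /= [-> ->].
Qed.

Lemma occurrence_window Z i : (Z, i) \in occurrences ->
  let a := (i + size Z).-1 in
  [/\ zat Z a = pred_edge (Z, i), zat Z a.+1 = e & zat Z a.+2 = next_edge (pred_edge (Z, i)) e].
Proof.
move/mem_occurrences => [hZ hi he] a; have zZ := tau_zigzag hZ.
have [e1 _] := zat_prev_window i (zigzag_size_gt0 zZ).
rewrite -/a he in e1; split => //.
by rewrite (next_edgeE (zigzag_local zZ a)) e1.
Qed.

Lemma pred_edge_face_pair p : p \in occurrences -> face_pair (pred_edge p) e.
Proof.
case: p => Z i ho; have [hZ _ _] := mem_occurrences ho.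
have [a1 a2 _] := occurrence_window ho.
by case: (zigzag_local (tau_zigzag hZ) (i + size Z).-1); rewrite a1 a2.
Qed.

(* An occurrence is determined by its preceding edge: two zigzags of tau
   passing through (x, e) are rotations of each other, hence equal, and a
   zigzag passes through (x, e) only once per period. *)
Lemma pred_edge_inj Z W (i j : nat) : (Z, i) \in occurrences -> (W, j) \in occurrences ->
  pred_edge (Z, i) = pred_edge (W, j) -> (Z, i) = (W, j).
Proof.
move=> ho1 ho2 hp.
have [hZ hi _] := mem_occurrences ho1; have [hW hj _] := mem_occurrences ho2.
have [a1 a2 _] := occurrence_window ho1; have [b1 b2 _] := occurrence_window ho2.
set a := (i + size Z).-1 in a1 a2; set b := (j + size W).-1 in b1 b2.
have zZ := tau_zigzag hZ; have zW := tau_zigzag hW.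
have h0 : zat Z a = zat W b by rewrite a1 b1.
have h1 : zat Z a.+1 = zat W b.+1 by rewrite a2 b2.
have eWZ : W = Z.
  by apply: tau_class_unique; rewrite // /same_class (zigzag_shift_cyc_eq zZ zW h0 h1).
subst W; have hn := zigzag_size_gt0 zZ.
case: (ltngtP i j) => [hij|hij|-> //]; exfalso.
- by apply: (zigzag_no_short_shift zZ (a := a) (b := b) _ _ h0 h1); rewrite /a /b; lia.
- by apply: (zigzag_no_short_shift zZ (a := b) (b := a)); rewrite // /a /b; lia.
Qed.

Definition nbr_edges := [set x | face_pair x e].
Definition flip x := next_edge x e.
Definition pred_set := [set x | x \in map pred_edge occurrences].

Lemma flip_involutive x : face_pair x e -> face_pair (flip x) e /\ flip (flip x) = x.
Proof.
move=> h; have t := zig_step_rev (zig_step_next h); case: (t) => v1 _ _ _.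
by split => //; rewrite /flip -(next_edgeE t).
Qed.

Lemma pred_set_face_pair x : x \in pred_set -> face_pair x e.
Proof. by rewrite inE => /mapP [p ho ->]; apply: pred_edge_face_pair. Qed.

Lemma pred_set_at Y k : Y \in tau -> zat Y k.+1 = e -> zat Y k \in pred_set.
Proof.
move=> hY hk; have hn := zigzag_size_gt0 (tau_zigzag hY).
rewrite inE; apply/mapP; exists (Y, k.+1 %% size Y).
  apply/flatten_mapP; exists Y => //; apply/mapP; exists (k.+1 %% size Y) => //.
  by rewrite mem_filter mem_iota add0n ltn_pmod // zat_mod hk eqxx.
rewrite /pred_edge /= zat_prev_mod // -(zat_addM Y k 1); congr zat; lia.
Qed.

(* x and flip x cannot both precede e in tau: the two zigzags would be
   reverses of each other up to rotation. *)
Lemma flip_not_pred x : x \in pred_set -> flip x \in pred_set -> False.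
Proof.
rewrite !inE => /mapP [[Z i] ho1 ->] /mapP [[W j] ho2 hpw].
have [hZ _ _] := mem_occurrences ho1; have [a1 a2 a3] := occurrence_window ho1.
have [hW _ _] := mem_occurrences ho2; have [b1 b2 _] := occurrence_window ho2.
set a := (i + size Z).-1 in a1 a2 a3; set b := (j + size W).-1 in b1 b2.
have zZ := tau_zigzag hZ; have zW := tau_zigzag hW.
have [q hq] := size_gt1E (zigzag_size_gt1 zZ).
have r0 : zat (rev Z) (a.+3 * q.+1) = zat W b.
  rewrite zat_rev ?hq // b1 -hpw /flip -a3 -(zat_addM Z a.+2 ((a + 3) * q + 1)) hq.
  by congr zat; lia.
have r1 : zat (rev Z) (a.+3 * q.+1).+1 = zat W b.+1.
  rewrite zat_rev ?hq // b2 -a2 -(zat_addM Z a.+1 ((a + 3) * q + 2)) hq.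
  by congr zat; lia.
have hc := zigzag_shift_cyc_eq (rev_zigzag zZ) zW r0 r1.
have eWZ : W = Z by apply: tau_class_unique; rewrite // /same_class hc orbT.
by subst W; move/negP: (rev_not_cyc_eq zZ); apply.
Qed.

(* One of x, flip x precedes e in tau: the zigzag through (x, e) is, up to
   rotation, either in tau or the reverse of a zigzag of tau. *)
Lemma pred_or_flip_pred x : face_pair x e -> x \in pred_set \/ flip x \in pred_set.
Proof.
move=> hx; pose p0 := (x, e); have hp : face_pair p0.1 p0.2 by [].
have zY := orbit_zigzag_zigzag hp; set Y := orbit_zigzag p0 in zY.
have Y0 : zat Y 0 = x := orbit_zigzag0 p0.
have Y1 : zat Y 1 = e := orbit_zigzag1 hp.
have Y2 : zat Y 2 = flip x := orbit_zigzag2 hp.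
have [q hq] := size_gt1E (zigzag_size_gt1 zY).
have : has (same_class Y) tau by rewrite has_count (tau_class_count zY).
case/hasP => Y' hY' /orP [] /cyc_eq_rot [d hd hrot].
- have zr k : zat Y' k = zat Y (k + d) by rewrite -hrot zat_rot // ltnW.
  left; rewrite -Y0 -(zat_addM Y 0 d).
  have -> : 0 + d * size Y = d * q.+1 + d by rewrite hq; lia.
  rewrite -zr; apply: pred_set_at => //.
  by rewrite zr -Y1 -(zat_addM Y 1 d); congr zat; rewrite hq; lia.
- rewrite size_rev in hd.
  have zr k : zat Y' k = zat Y ((k + d).+1 * q.+1).
    rewrite -hrot zat_rot ?zat_rev ?hq // size_rev; exact: ltnW.
  right; rewrite -Y2 -(zat_addM Y 2 ((d + 3) * q + d + 1)).
  have -> : 2 + ((d + 3) * q + d + 1) * size Y = ((d + 3) * q.+1 + d).+1 * q.+1.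
    by rewrite hq; nia.
  rewrite -zr; apply: pred_set_at => //.
  rewrite zr -Y1 -(zat_addM Y 1 ((d + 3) * q + d + 2)).
  by congr zat; rewrite hq; nia.
Qed.

Definition face_nbrs (h : {set T}) := [set x : {set T} | (x \subset h) && (#|x| == 2)] :\ e.

Lemma face_nbrs_card h : h \in F -> e \subset h -> #|face_nbrs h| = 2.
Proof.
move=> hh sh; have := cardsD1 e [set x : {set T} | (x \subset h) && (#|x| == 2)].
rewrite cards_draws (face_card hh) inE sh (edge_card He) eqxx /=.
by rewrite (_ : 'C(3, 2) = 3) // add1n => -[].
Qed.

(* Each of the two faces through e contributes two edges x with face_pair x e. *)
Lemma nbr_edges_card : #|nbr_edges| = 4.
Proof.
have [f hf sf] := edge_in_face He.
have [g [hg sg ngf U]] := other_face He hf sf.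
have face_pairP h x : h \in F -> e \subset h -> x \in face_nbrs h -> face_pair x e /\ x :|: e = h.
  move=> hh sh; rewrite !inE => /andP [hxe /andP [sx /eqP cx]].
  have hx := edge_of_face hh sx cx; have eU := edges_span_face hx He hxe hh sx sh.
  by rewrite /face_pair hx He hxe eU hh.
have -> : nbr_edges = face_nbrs f :|: face_nbrs g.
  apply/setP => x; rewrite in_setU inE; apply/idP/idP.
  - case/and4P => hx _ hxe hxf; rewrite !inE (edge_card hx) eqxx hxe /= !andbT.
    by case: (U _ hxf (subsetUr x e)) => <-; rewrite subsetUl ?orbT.
  - by case/orP => [/(face_pairP _ _ hf sf) | /(face_pairP _ _ hg sg)] [].
have disj : face_nbrs f :&: face_nbrs g = set0.
  apply/setP => x; rewrite inE in_set0; apply/negP => /andP [xf xg].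
  have [_ ef] := face_pairP _ _ hf sf xf; have [_ eg] := face_pairP _ _ hg sg xg.
  by rewrite -ef -eg eqxx in ngf.
have := cardsUI (face_nbrs f) (face_nbrs g).
by rewrite disj cards0 addn0 (face_nbrs_card hf sf) (face_nbrs_card hg sg).
Qed.

Lemma pred_set_card : #|pred_set| = 2.
Proof.
set J := [set flip x | x in pred_set].
have flipK x : x \in pred_set -> flip (flip x) = x.
  by move/pred_set_face_pair/flip_involutive => [].
have cJ : #|J| = #|pred_set| by apply: card_in_imset; exact: can_in_inj flipK.
have U : nbr_edges = pred_set :|: J.
  apply/setP => x; rewrite in_setU [in LHS]inE; apply/idP/orP.
  - move=> hx; case: (pred_or_flip_pred hx) => h; [by left | right].
    by apply/imsetP; exists (flip x) => //; rewrite (proj2 (flip_involutive hx)).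
  - case => [/pred_set_face_pair // | /imsetP [y hy ->]].
    exact: (proj1 (flip_involutive (pred_set_face_pair hy))).
have D : pred_set :&: J = set0.
  apply/setP => y; rewrite inE in_set0; apply/negP => /andP [hy /imsetP [x hx ey]].
  by subst y; apply: (flip_not_pred hx hy).
by have := cardsUI pred_set J; rewrite -U D cards0 nbr_edges_card cJ addn0; lia.
Qed.

Lemma edge_passages_size : size (edge_passages tau e) = 2.
Proof.
rewrite edge_passagesE size_map -(size_map pred_edge) -pred_set_card /pred_set cardsE.
apply/esym/card_uniqP; rewrite map_inj_in_uniq; first exact: occurrences_uniq.
by move=> [Z i] [W j]; apply: pred_edge_inj.
Qed.

Lemma edge_passage_form p : p \in edge_passages tau e ->
  exists a b, [/\ a != b, a \in e, b \in e & p = ([set a], [set b])].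
Proof.
rewrite edge_passagesE => /mapP [[Z i] ho ->].
have [hZ _ ei] := mem_occurrences ho; rewrite -ei; exact: passage_sets.
Qed.

End Edge.

Definition all_passages := [seq passage (Z, i) | Z <- tau, i <- iota 0 (size Z)].

Lemma mem_all_passages p : p \in all_passages ->
  exists2 Z, Z \in tau & exists i, p = passage (Z, i).
Proof. by case/flatten_mapP => Z hZ /mapP [i _ ->]; exists Z => //; exists i. Qed.

Lemma all_passages_sets p : p \in all_passages -> exists a b, p = ([set a], [set b]).
Proof.
case/mem_all_passages => Z hZ [i ->].
by have [a [b [_ _ _ ->]]] := passage_sets i hZ; exists a, b.
Qed.

(* Step 1: each vertex is entered as often as it is left, since the exit of
   the i-th passage of a zigzag is the entry of its (i+1)-th passage. *)
Lemma passage_conservation v :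
  count (fun p => p.2 == [set v]) all_passages = count (fun p => p.1 == [set v]) all_passages.
Proof.
rewrite /all_passages !count_flatten -!map_comp; congr sumn; apply: eq_map => Z /=.
rewrite !count_map.
have exit_entry i : (passage (Z, i)).2 = (passage (Z, i.+1)).1.
  by rewrite /passage /= -(zat_add_size Z i); congr (zat _ _ :&: _); lia.
transitivity (count (fun i => (passage (Z, i.+1)).1 == [set v]) (iota 0 (size Z))).
  by apply: eq_count => i; exact: (congr1 (eq_op^~ [set v]) (exit_entry i)).
rewrite (count_iota_shift (g := fun i => (passage (Z, i)).1 == [set v])) /=.
  by apply: eq_count.
case: (posnP (size Z)) => hn; first by rewrite hn.
have e1 : zat Z (size Z + size Z).-1 = zat Z (size Z).-1.
  by rewrite -(zat_add_size Z (size Z).-1); congr zat; lia.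
have e2 : zat Z (size Z) = zat Z 0 by rewrite -{1}(add0n (size Z)) zat_add_size.
by rewrite /passage /= add0n e1 e2.
Qed.

Lemma count_entering v : count (fun p => p.2 == [set v]) all_passages =
  \sum_u count (pred1 ([set u], [set v])) all_passages.
Proof.
apply: count_sum => p /all_passages_sets [a [b ->]] /=.
under eq_bigr => u _ do rewrite /= xpair_eqE !(inj_eq set1_inj).
by rewrite (inj_eq set1_inj) sum_eq_single.
Qed.

Lemma count_leaving v : count (fun p => p.1 == [set v]) all_passages =
  \sum_u count (pred1 ([set v], [set u])) all_passages.
Proof.
apply: count_sum => p /all_passages_sets [a [b ->]] /=.
under eq_bigr => u _ do rewrite /= xpair_eqE !(inj_eq set1_inj) andbC.
by rewrite (inj_eq set1_inj) sum_eq_single.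
Qed.

Lemma passage_edge Z (i : nat) u w : Z \in tau ->
  passage (Z, i) = ([set u], [set w]) -> zat Z i = [set u; w].
Proof.
move=> hZ hq; have [a [b [nab ha hb hab]]] := passage_sets i hZ.
move: hq; rewrite hab => -[/set1_inj <- /set1_inj <-].
apply/esym/eqP; rewrite eqEcard subUset !sub1set ha hb /= cards2 nab.
by case: (zigzag_local (tau_zigzag hZ) i) => /and4P [he _ _ _] _ _ _; rewrite (edge_card he).
Qed.

Lemma count_passages_edge u w : count (pred1 ([set u], [set w])) all_passages =
  count (pred1 ([set u], [set w])) (edge_passages tau [set u; w]).
Proof.
rewrite /all_passages /edge_passages !count_flatten -!map_comp; congr sumn.
apply/eq_in_map => Z hZ /=; rewrite !count_map count_filter.
apply: eq_in_count => i _ /=.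
by case: eqP => //= hq; apply/esym/eqP; exact: passage_edge hZ hq.
Qed.

Lemma edge_passages_nil (E : {set T}) : ~~ is_edge F E -> edge_passages tau E = [::].
Proof.
move=> hE; rewrite edge_passagesE; case: occurrences (@mem_occurrences E) => // p s.
move/(_ p.1 p.2); rewrite -surjective_pairing mem_head => /(_ isT) [hZ _ he].
case: (tau_zigzag hZ) => [[_ hed] _ _ _ _].
by have := hed p.2; rewrite he (negbTE hE).
Qed.

Definition npass u w := count (pred1 ([set u], [set w])) (edge_passages tau [set u; w]).

Lemma npass_pair u w : npass u w + npass w u = (if is_edge F [set u; w] then 2 else 0).
Proof.
rewrite /npass [[set w; u]]setUC.
case: (boolP (is_edge F [set u; w])) => hE; last by rewrite edge_passages_nil.
have nuw : u != w.
  by apply: contraTneq hE => ->; rewrite setUid /is_edge cards1.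
set P := edge_passages tau [set u; w].
have hq : ([set u], [set w]) != ([set w], [set u]).
  by rewrite xpair_eqE (inj_eq set1_inj) (negbTE nuw).
have := count_predUI (pred1 ([set u], [set w])) (pred1 ([set w], [set u])) P.
rewrite (@eq_in_count _ _ predT); last first.
  move=> p /edge_passage_form [a [b [nab ha hb ->]]] /=.
  move: ha hb; rewrite !inE.
  case/orP => /eqP ea; case/orP => /eqP eb; subst a b; rewrite ?eqxx ?orbT //;
    by rewrite eqxx in nab.
rewrite count_predT edge_passages_size // (@eq_count _ _ pred0) ?count_pred0 ?addn0 //.
by move=> p /=; apply/negP => /andP [/eqP -> /eqP h]; rewrite h eqxx in hq.
Qed.

Lemma npass_balance v : \sum_u npass u v = \sum_u npass v u.
Proof.
under eq_bigr => u _ do rewrite /npass -count_passages_edge.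
rewrite -count_entering passage_conservation count_leaving.
by apply: eq_bigr => u _; rewrite count_passages_edge.
Qed.

Lemma typeII_dirE u w : typeII_dir tau u w = (npass u w == 2).
Proof.
rewrite /typeII_dir /npass; case: (boolP (is_edge F [set u; w])) => hE.
  by rewrite perm_eq_double // edge_passages_size.
by rewrite edge_passages_nil //=; apply/negbTE/negP => /perm_size.
Qed.

Lemma npass_split u w :
  npass u w = typeII_dir tau u w * 2 + (npass u w == 1) /\
  (npass u w == 1) = (npass w u == 1).
Proof.
rewrite typeII_dirE; have := npass_pair u w.
by case: ifP => _; case: (npass u w) => [|[|[|a]]]; case: (npass w u) => [|[|[|b]]].
Qed.

Lemma typeII_balance v : #|[set u | typeII_dir tau u v]| = #|[set w | typeII_dir tau v w]|.
Proof.
have card_sum (P : pred T) : #|[set u | P u]| = \sum_u P u.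
  rewrite cardsE -sum1_card big_mkcond /=; apply: eq_bigr => u _.
  by rewrite unfold_in; case: (P u).
have in_sum : \sum_u npass u v =
    (\sum_u (typeII_dir tau u v : nat)) * 2 + \sum_u ((npass u v == 1) : nat).
  by rewrite big_distrl -big_split; apply: eq_bigr => u _; exact: (npass_split u v).1.
have out_sum : \sum_u npass v u =
    (\sum_u (typeII_dir tau v u : nat)) * 2 + \sum_u ((npass u v == 1) : nat).
  rewrite big_distrl -big_split; apply: eq_bigr => u _ /=.
  by rewrite (npass_split u v).2 -(npass_split v u).1.
have := npass_balance v; rewrite in_sum out_sum => /eqP.
by rewrite eqn_add2r eqn_pmul2r // !card_sum => /eqP.
Qed.

End Orientation.
End Triangulation.

Unset Implicit Arguments.

Theorem lemma1 (T : finType) (F : {set {set T}}) (tau : seq (seq {set T})) (v : T) :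
  is_triangulation F -> z_orientation F tau -> vertex_typeII F tau v ->
  #|[set u | typeII_dir tau u v]| = #|[set w | typeII_dir tau v w]|.
Proof. by move=> HT Htau _; exact: (typeII_balance HT Htau v). Qed.
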